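(* Let $\Theta\subseteq\mathbb{R}^d$ and let $\{f_\theta:\theta\in\Theta\}$ be functions $[0,\infty)\times\mathbb{N}_0\to[0,\infty)$. Let $\theta_0\in\Theta$ and suppose there exist $\delta>0$, $C<\infty$, $\kappa_1,\kappa_2\ge0$ with $\kappa_1+\kappa_2<1$ such that for all $\theta'\in\Theta$ with $\|\theta'-\theta_0\|\le\delta$: (i) $|f_{\theta'}(\lambda,y)-f_{\theta_0}(\lambda,y)|\le C\|\theta'-\theta_0\|(\lambda+y+1)$ for all $\lambda\ge0$, $y\in\mathbb{N}_0$; (ii) $|f_{\theta'}(\lambda,y)-f_{\theta'}(\tilde\lambda,\tilde y)|\le\kappa_1|\lambda-\tilde\lambda|+\kappa_2|y-\tilde y|$ for all $\lambda,\tilde\lambda\ge0$, $y,\tilde y\in\mathbb{N}_0$. Let $((N_t,\lambda_t))_{t\in\mathbb{Z}}$ be a strictly stationary process with $N_t\mid\sigma(\lambda_s,N_s:s\le t-1)\sim\mathrm{Poisson}(\lambda_t)$ and $\lambda_t=f_{\theta_0}(\lambda_{t-1},N_{t-1})$. Let $\widehat\theta_n$ be estimators (based on $N_1,\dots,N_n$) with $\widehat\theta_n-\theta_0=O_P(n^{-1/2})$, let $\widehat\lambda_1\ge0$ be an arbitrary (random or non-random, almost surely finite) starting value, and define $\widehat\lambda_t=f_{\widehat\theta_n}(\widehat\lambda_{t-1},N_{t-1})$ for $t=2,\dots,n$. Then $$\sum_{t=1}^n(\lambda_t-\widehat\lambda_t)^2=O_P(1).$$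
   Context: $O_P(a_n)$: a sequence of random variables $X_n$ is $O_P(a_n)$ if $X_n/a_n$ is bounded in probability. *)

From HB Require Import structures.
From mathcomp Require Import all_boot all_order all_algebra.
From mathcomp Require Import all_classical all_reals all_analysis.
Set Implicit Arguments. Unset Strict Implicit. Unset Printing Implicit Defensive.
Import Order.TTheory GRing.Theory Num.Theory.
Local Open Scope classical_set_scope.
Local Open Scope ring_scope.

(* Poisson pmf  lam^k e^{-lam} / k!  (valid also for lam = 0: Poisson(0) = delta_0).
   (The library's poisson_pmf returns 1 for rate 0, so we do not use it.) *)
Definition pois_pmf {R : realType} (lam : R) (k : nat) : R :=
  lam ^+ k * (k`!%:R)^-1 * expR (- lam).

Definition enorm {R : realType} {d : nat} (v : 'rV[R]_d) : R :=
  Num.sqrt (\sum_(i < d) v ord0 i ^+ 2).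

(* Bounded in probability (eventually in n); probabilities of the events
   {M < |X_n|} are taken as outer probabilities (bounded by a measurable
   superset), so that no measurability of X_n is needed. *)
Definition bounded_in_prob {R : realType} {dT : measure_display}
  {T : measurableType dT} (P : probability T R) (X : nat -> T -> R) : Prop :=
  forall eps : R, 0 < eps -> exists M : R, exists n0 : nat,
    forall n : nat, (n0 <= n)%N ->
      exists A : set T, measurable A /\ [set w | M < `|X n w|] `<=` A /\
        (P A <= eps%:E)%E.

Definition OP {R : realType} {dT : measure_display} {T : measurableType dT}
  (P : probability T R) (X : nat -> T -> R) (a : nat -> R) : Prop :=
  bounded_in_prob P (fun n w => X n w / a n).

Definition past_sigma {R : realType} {dT : measure_display}
  {T : measurableType dT} (N : int -> T -> nat) (lam : int -> T -> R)
  (t : int) : set (set T) :=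
  <<s [set A | exists s : int, s <= t - 1 /\
        ((exists B : set R, measurable B /\ A = lam s @^-1` B) \/
         (exists C : set nat, A = N s @^-1` C))] >>.

(* Strict stationarity of ((N_t, lam_t))_t : all finite-dimensional
   distributions are shift invariant (tested on measurable rectangles,
   which generate the product sigma-algebra). *)
Definition strictly_stationary {R : realType} {dT : measure_display}
  {T : measurableType dT} (P : probability T R)
  (N : int -> T -> nat) (lam : int -> T -> R) : Prop :=
  forall (h : int) (k : nat) (ts : 'I_k -> int)
         (B : 'I_k -> set R) (C : 'I_k -> set nat),
    (forall i, measurable (B i)) ->
    P (\bigcap_(i in [set: 'I_k])
         [set w | B i (lam (ts i + h) w) /\ C i (N (ts i + h) w)]) =
    P (\bigcap_(i in [set: 'I_k])
         [set w | B i (lam (ts i) w) /\ C i (N (ts i) w)]).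

(* lamhat f th l1 Nn t = \hat\lambda_{t+1}, with \hat\lambda_1 = l1 and
   \hat\lambda_{s+1} = f_th(\hat\lambda_s, N_s). *)
Fixpoint lamhat {R : realType} {d : nat} (f : 'rV[R]_d -> R -> nat -> R)
  (th : 'rV[R]_d) (l1 : R) (Nn : nat -> nat) (t : nat) : R :=
  match t with
  | 0 => l1
  | t'.+1 => f th (lamhat f th l1 Nn t') (Nn t'.+1)
  end.

From HB Require Import structures.
From mathcomp Require Import all_boot all_order all_algebra.
From mathcomp Require Import all_classical all_reals all_analysis.
From mathcomp Require Import measurable_realfun.
From mathcomp Require Import ring lra.
Import Order.TTheory GRing.Theory Num.Theory.
Local Open Scope classical_set_scope.
Local Open Scope ring_scope.

(* Write d_t = lambda_t - lambdahat_t and e_n = |thetahat_n - theta0|.  As soon as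
   e_n <= delta, (i) and (ii) give the contraction
     |d_{t+1}| <= kappa1 |d_t| + C e_n (lambda_t + N_t + 1),
   hence, with c = 1 / (1 - kappa1),
     sum_t d_t^2 <= c (d_1^2 + c C^2 e_n^2 sum_{t <= n} (lambda_t + N_t + 1)^2).
   Since e_n^2 = O_P(1/n), it remains to see that (1/n) sum_{t <= n} (lambda_t + N_t + 1)^2
   = O_P(1).  Markov's inequality on A, and P(A^c) small for K large, conclude. *)

Lemma pois_pmf_ge0 (R : realType) (l : R) k : 0 <= l -> 0 <= pois_pmf l k.
Proof.
by move=> l0; rewrite /pois_pmf !mulr_ge0 ?exprn_ge0 ?invr_ge0 ?ler0n ?expR_ge0.
Qed.

Lemma exp_partial_sum_le (R : realType) (l : R) n : 0 <= l ->
  \sum_(j < n) l ^+ j / j`!%:R <= expR l.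
Proof.
move=> l0.
have -> : \sum_(j < n) l ^+ j / j`!%:R = series (exp_coeff l) n.
  by rewrite /series /= -(big_mkord xpredT (fun j => l ^+ j / j`!%:R)).
apply: nondecreasing_cvgn_le; last exact: is_cvg_series_exp_coeff.
apply/nondecreasing_series => k _; rewrite /exp_coeff /=.
by rewrite divr_ge0 // exprn_ge0.
Qed.

(* k^2 = k (k - 1) + k splits the sum into the second and first factorial moments. *)
Lemma sum_sqr_exp_coeff (R : realType) (l : R) n :
  \sum_(k < n.+2) k%:R ^+ 2 * (l ^+ k / k`!%:R) =
  l ^+ 2 * \sum_(j < n) l ^+ j / j`!%:R + l * \sum_(j < n.+1) l ^+ j / j`!%:R.
Proof.
elim: n => [|n IH].
  rewrite !big_ord_recr !big_ord0 /= !factS fact0 !expr0n /= !expr1n expr1.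
  by rewrite !mul0r !mulr0 !add0r !divr1 !mulr1 !mul1r.
rewrite big_ord_recr /= IH [in RHS]big_ord_recr [in X in _ = _ + X]big_ord_recr /=.
rewrite !factS !natrM !exprS expr0 -[n.+2%:R]natr1.
have fact_neq0 : (n`!%:R : R) != 0 by rewrite pnatr_eq0 -lt0n fact_gt0.
have n1_gt0 : (0 : R) < n.+1%:R by rewrite ltr0n.
by field; rewrite fact_neq0 !gt_eqF ?ltr_wpDr.
Qed.

Lemma sum_sqr_pois_pmf_le (R : realType) (l : R) n : 0 <= l ->
  \sum_(k < n) k%:R ^+ 2 * pois_pmf l k <= l + l ^+ 2.
Proof.
move=> l0.
apply: (@le_trans _ _ (\sum_(k < n.+2) k%:R ^+ 2 * pois_pmf l k)).
  rewrite (big_ord_widen n.+2 (fun k => k%:R ^+ 2 * pois_pmf l k)) ?leqW //.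
  rewrite big_mkcond /=; apply: ler_sum => i _; case: ifP => // _.
  by rewrite mulr_ge0 ?sqr_ge0 ?pois_pmf_ge0.
have -> : \sum_(k < n.+2) k%:R ^+ 2 * pois_pmf l k =
    (\sum_(k < n.+2) k%:R ^+ 2 * (l ^+ k / k`!%:R)) * expR (- l).
  by rewrite mulr_suml; apply: eq_bigr => i _; rewrite /pois_pmf !mulrA.
rewrite sum_sqr_exp_coeff.
apply: (@le_trans _ _ ((l ^+ 2 * expR l + l * expR l) * expR (- l))).
  by rewrite ler_wpM2r ?expR_ge0 // lerD // ler_wpM2l ?sqr_ge0 // exp_partial_sum_le.
by rewrite mulrDl -!mulrA expRxMexpNx_1 !mulr1 addrC.
Qed.

Lemma sum_sqr_contraction_le (R : realType) (k : R) (u e : nat -> R) n :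
  0 <= k -> k < 1 -> (forall i, 0 <= e i) ->
  (forall i, `|u i.+1| <= k * `|u i| + e i) ->
  \sum_(i < n) u i ^+ 2 <=
    (u 0%N ^+ 2 + (1 - k)^-1 * \sum_(i < n) e i ^+ 2) / (1 - k).
Proof.
move=> k0 k1 e0 hu.
have k1' : 0 < 1 - k by rewrite subr_gt0.
set c := (1 - k)^-1.
(* Young: (k a + b)^2 <= k a^2 + b^2 / (1 - k), by convexity of the square. *)
have step i : u i.+1 ^+ 2 <= k * u i ^+ 2 + c * e i ^+ 2.
  rewrite -[u i.+1 ^+ 2]real_normK ?num_real // -[u i ^+ 2]real_normK ?num_real //.
  apply: (@le_trans _ _ ((k * `|u i| + e i) ^+ 2)).
    by rewrite lerXn2r ?nnegrE ?addr_ge0 ?mulr_ge0.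
  rewrite -subr_ge0 (_ : _ - _ = k * c * ((1 - k) * `|u i| - e i) ^+ 2).
    by rewrite mulr_ge0 ?sqr_ge0 // mulr_ge0 // /c invr_ge0 ltW.
  by rewrite /c; field; rewrite lt0r_neq0.
set S := fun m => \sum_(i < m) u i ^+ 2.
set E := fun m => \sum_(i < m) e i ^+ 2.
have S_le : S n <= u 0%N ^+ 2 + k * S n + c * E n.
  case: n => [|m]; first by rewrite /S /E !big_ord0 !mulr0 !addr0 sqr_ge0.
  have S_mon : S m <= S m.+1 by rewrite /S big_ord_recr lerDl sqr_ge0.
  have E_mon : E m <= E m.+1 by rewrite /E big_ord_recr lerDl sqr_ge0.
  apply: (@le_trans _ _ (u 0%N ^+ 2 + k * S m + c * E m)).
    rewrite /S big_ord_recl -addrA lerD2l /E mulr_sumr mulr_sumr -big_split.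
    by apply: ler_sum => i _; exact: step.
  rewrite -!addrA lerD2l lerD ?ler_wpM2l // invr_ge0 ltW //.
rewrite ler_pdivlMr // -/(S n) -/(E n); nra.
Qed.

Lemma sqr_le_affine (R : realType) (y a k1 k2 l m : R) :
  0 <= a -> 0 <= k1 -> 0 <= k2 -> k1 + k2 < 1 ->
  0 <= y -> y <= a + k1 * l + k2 * m ->
  y ^+ 2 <= a ^+ 2 / (1 - (k1 + k2)) + k1 * l ^+ 2 + k2 * m ^+ 2.
Proof.
move=> a0 k10 k20 kk y0 hy.
have k_lt : 0 < 1 - (k1 + k2) by rewrite subr_gt0.
apply: (@le_trans _ _ ((a + k1 * l + k2 * m) ^+ 2)).
  by rewrite lerXn2r ?nnegrE ?(le_trans y0).
rewrite -subr_ge0.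
have -> : a ^+ 2 / (1 - (k1 + k2)) + k1 * l ^+ 2 + k2 * m ^+ 2 - (a + k1 * l + k2 * m) ^+ 2 =
   (1 - (k1 + k2)) * k1 * (a / (1 - (k1 + k2)) - l) ^+ 2
   + (1 - (k1 + k2)) * k2 * (a / (1 - (k1 + k2)) - m) ^+ 2 + k1 * k2 * (l - m) ^+ 2.
  by field; rewrite lt0r_neq0.
by rewrite !addr_ge0 //; apply: mulr_ge0; rewrite ?sqr_ge0 // mulr_ge0 // ltW.
Qed.

Section lamhat_error.
Context {R : realType} {d : nat} {f : 'rV[R]_d -> R -> nat -> R}.
Context {th th0 : 'rV[R]_d} {kappa1 kappa2 c : R}.
Hypothesis f_ge0 : forall (l : R) y, 0 <= l -> 0 <= f th l y.
Hypothesis f_lip : forall (l l' : R) y y', 0 <= l -> 0 <= l' ->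
  `|f th l y - f th l' y'| <= kappa1 * `|l - l'| + kappa2 * `|y%:R - y'%:R|.
Hypothesis f_near : forall (l : R) y, 0 <= l ->
  `|f th l y - f th0 l y| <= c * (l + y%:R + 1).

Let f_lipl (l l' : R) y : 0 <= l -> 0 <= l' ->
  `|f th l y - f th l' y| <= kappa1 * `|l - l'|.
Proof. by move=> l0 l'0; have := f_lip l l' y y l0 l'0; rewrite subrr normr0 mulr0 addr0. Qed.

Lemma lamhat_ge0 (l1 : R) Nn t : 0 <= l1 -> 0 <= lamhat f th l1 Nn t.
Proof. by move=> l10; elim: t => [|t IH] //=; exact: f_ge0. Qed.

Lemma sum_sqr_lamhat_err_le (l : nat -> R) (Nn : nat -> nat) (l1 : R) n :
  0 <= kappa1 -> kappa1 < 1 -> 0 <= l1 -> (forall i, 0 <= l i) ->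
  (forall i, l i.+1 = f th0 (l i) (Nn i.+1)) ->
  \sum_(i < n) (l i - lamhat f th l1 Nn i) ^+ 2 <=
    ((l 0%N - l1) ^+ 2 + (1 - kappa1)^-1 * c ^+ 2 *
      \sum_(i < n) (l i + (Nn i.+1)%:R + 1) ^+ 2) / (1 - kappa1).
Proof.
move=> k0 k1 l10 l0 lE.
pose e i := c * (l i + (Nn i.+1)%:R + 1).
have e0 i : 0 <= e i := le_trans (normr_ge0 _) (f_near _ (Nn i.+1) (l0 i)).
rewrite (_ : _ * \sum_(i < n) _ = (1 - kappa1)^-1 * \sum_(i < n) e i ^+ 2).
  apply: (@sum_sqr_contraction_le _ _ (fun i => l i - lamhat f th l1 Nn i)) => // i.
  rewrite /= lE; set y := Nn i.+1; set lh := lamhat f th l1 Nn i.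
  rewrite (_ : _ - _ = (f th (l i) y - f th lh y) - (f th (l i) y - f th0 (l i) y)).
    by rewrite (le_trans (ler_normB _ _)) // lerD ?f_lipl ?lamhat_ge0 ?f_near.
  by ring.
by rewrite -mulrA mulr_sumr; congr (_ * _); apply: eq_bigr => i _; rewrite exprMn.
Qed.

End lamhat_error.

Section probability_lemmas.
Context {d : measure_display} {T : measurableType d} {R : realType} (P : probability T R).
Implicit Types (A : set T) (g : T -> R).

Lemma measurable_cst_ltr g (K : R) : measurable_fun setT g -> measurable [set w | K < g w].
Proof.
move=> mg; rewrite -[X in measurable X]setTI.
rewrite (_ : [set w | K < g w] = g @^-1` `]K, +oo[); first exact: mg.
by apply/seteqP; split => w /=; rewrite in_itv /= andbT.
Qed.

Lemma measurable_ler_cst g (K : R) : measurable_fun setT g -> measurable [set w | g w <= K].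
Proof.
move=> mg; rewrite -[X in measurable X]setTI.
rewrite (_ : [set w | g w <= K] = g @^-1` `]-oo, K]); first exact: mg.
by apply/seteqP; split => w /=; rewrite in_itv.
Qed.

Lemma measurable_natr (M : T -> nat) :
  (forall k, measurable (M @^-1` [set k])) -> measurable_fun setT (fun w => (M w)%:R : R).
Proof.
move=> mM _ B _; rewrite setTI.
rewrite (_ : _ @^-1` B = \bigcup_(k in [set k | B k%:R]) M @^-1` [set k]).
  exact: bigcup_measurable.
by apply/seteqP; split => [w Bw|w [k /= Bk Mk]]; [exists (M w)|rewrite /= Mk].
Qed.

Lemma measurable_pois_pmf g k :
  measurable_fun setT g -> measurable_fun setT (fun w => pois_pmf (g w) k).
Proof.
move=> mg; apply: measurable_funM; first apply: measurable_funM.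
- exact: measurable_funX.
- exact: measurable_cst.
- exact: measurableT_comp (@measurable_expR R) (measurable_funN mg).
Qed.

Lemma prob_tail_small g : measurable_fun setT g -> forall eps : R, 0 < eps ->
  exists K : R, (P [set w | (K < g w)%R] <= eps%:E)%E.
Proof.
move=> mg eps e0.
have gP : g \in mfun by rewrite inE.
have := cvg_ccdfy0 (mfun_Sub gP : {RV P >-> R}).
move=> /fine_cvgP[_ /cvgr_lt /(_ _ e0)] => -[K [_ /(_ (K + 1))]].
rewrite ltrDl ltr01 => /(_ isT) /=; rewrite /ccdf /distribution /pushforward /=.
rewrite (_ : g @^-1` `]K + 1, +oo[ = [set w | K + 1 < g w]); last first.
  by apply/seteqP; split=> w /=; rewrite in_itv /= andbT.
move=> tail_lt; exists (K + 1).
have tail_fin : P [set w | K + 1 < g w] \is a fin_num.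
  rewrite ge0_fin_numE // (le_lt_trans (probability_le1 _ _)) ?ltry //.
  exact: measurable_cst_ltr.
by rewrite -(fineK tail_fin) lee_fin ltW.
Qed.

Local Open Scope ereal_scope.

Lemma markov_setI A g (c : R) : measurable A -> measurable_fun setT g ->
  (forall w, (0 <= g w)%R) -> (0 < c)%R ->
  c%:E * P (A `&` [set w | (c < g w)%R]) <= \int[P]_(w in A) (g w)%:E.
Proof.
move=> mA mg g0 c0.
have mAc : measurable (A `&` [set w | (c < g w)%R]).
  by apply: measurableI => //; exact: measurable_cst_ltr.
rewrite -integral_cst //.
apply: (@le_trans _ _ (\int[P]_(w in A `&` [set w | (c < g w)%R]) (g w)%:E)).
  apply: ge0_le_integral => //.
  - by move=> x _; rewrite lee_fin ltW.
  - by apply/measurable_EFinP; exact: measurable_funTS.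
  - by move=> x [_ /= gx]; rewrite lee_fin ltW.
apply: ge0_subset_integral => //; last by move=> x _; rewrite lee_fin.
by apply/measurable_EFinP; exact: measurable_funTS.
Qed.

Lemma integral_le_affine A (F g h : T -> R) (c al be G H U : R) : measurable A ->
  measurable_fun setT F -> measurable_fun setT g -> measurable_fun setT h ->
  (forall w, 0 <= F w)%R -> (forall w, 0 <= g w)%R -> (forall w, 0 <= h w)%R ->
  (0 <= c)%R -> (0 <= al)%R -> (0 <= be)%R ->
  (forall w, A w -> F w <= c + al * g w + be * h w)%R ->
  \int[P]_(w in A) (g w)%:E <= G%:E -> \int[P]_(w in A) (h w)%:E <= H%:E ->
  (c + al * G + be * H <= U)%R -> \int[P]_(w in A) (F w)%:E <= U%:E.
Proof.
move=> mA mF mg mh F0 g0 h0 c0 al0 be0 Fle gG hH GHU.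
apply: (@le_trans _ _ (c + al * G + be * H)%:E); last by rewrite lee_fin.
have mEFin (k : T -> R) : measurable_fun setT k -> measurable_fun A (fun w => (k w)%:E).
  by move=> mk; apply/measurable_EFinP; exact: measurable_funTS.
apply: (@le_trans _ _ (\int[P]_(w in A) (c + al * g w + be * h w)%:E)).
  apply: ge0_le_integral => //; first by move=> w _; rewrite lee_fin.
  - exact: mEFin.
  - apply/mEFin/measurable_funD; first apply: measurable_funD.
    + exact: measurable_cst.
    + exact: measurable_funM (measurable_cst _) mg.
    + exact: measurable_funM (measurable_cst _) mh.
under eq_integral do rewrite !EFinD.
rewrite ge0_integralD //; first last.
- by apply: mEFin; exact: measurable_funM.
- by move=> w _; rewrite lee_fin mulr_ge0.
- by apply: emeasurable_funD; apply: mEFin => //; exact: measurable_funM.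
- by move=> w _; rewrite adde_ge0 // lee_fin ?mulr_ge0.
rewrite ge0_integralD //; first last.
- by apply: mEFin; exact: measurable_funM.
- by move=> w _; rewrite lee_fin mulr_ge0.
rewrite (integral_cst P mA c%:E) !EFinD.
under eq_integral do rewrite EFinM.
under [X in _ + X <= _]eq_integral do rewrite EFinM.
rewrite !ge0_integralZl_EFin //; try by [move=> w _; rewrite lee_fin|exact: mEFin].
rewrite !EFinM leeD ?leeD ?lee_wpmul2l ?lee_fin //.
by rewrite -[leRHS]mule1 lee_wpmul2l ?lee_fin // probability_le1.
Qed.

End probability_lemmas.

Local Open Scope ereal_scope.

Lemma integral_sqr_le_pois d (T : measurableType d) (R : realType) (P : probability T R)
  (M : T -> nat) (L : T -> R) (A : set T) :
  measurable A -> (forall k, measurable (M @^-1` [set k])) ->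
  measurable_fun setT L -> (forall w, (0 <= L w)%R) ->
  (forall k : nat, P (A `&` [set w | M w = k]) = \int[P]_(w in A) (pois_pmf (L w) k)%:E) ->
  \int[P]_(w in A) (((M w)%:R ^+ 2 : R)%:E) <= \int[P]_(w in A) ((L w + L w ^+ 2)%:E).
Proof.
move=> mA mM mL L0 hP.
pose term (k : nat) (x : T) := ((k%:R ^+ 2 : R) * \1_(M @^-1` [set k]) x)%:E.
pose pterm (k : nat) (x : T) := ((k%:R ^+ 2 : R) * pois_pmf (L x) k)%:E.
have term0 k x : 0 <= term k x by rewrite lee_fin mulr_ge0 ?sqr_ge0.
have mterm k : measurable_fun A (term k).
  apply/measurable_EFinP/measurable_funM; first exact: measurable_cst.
  by apply: measurable_funTS; exact: measurable_indic.
have pterm0 k x : 0 <= pterm k x by rewrite lee_fin mulr_ge0 ?sqr_ge0 ?pois_pmf_ge0.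
have mpterm k : measurable_fun A (pterm k).
  apply/measurable_EFinP/measurable_funM; first exact: measurable_cst.
  by apply: measurable_funTS; exact: measurable_pois_pmf.
have M_series w : (((M w)%:R ^+ 2 : R)%:E) = \sum_(k <oo) term k w.
  rewrite (@nneseriesD1 R _ (M w)) //= /term.
  rewrite indicE mem_set // mulr1 eseries0 ?adde0 // => i _ iM.
  by rewrite indicE memNset ?mulr0 // => /= /eqP; rewrite eq_sym (negbTE iM).
have term_pois k : \int[P]_(x in A) term k x = \int[P]_(x in A) pterm k x.
  rewrite (@integralZl_indic _ _ _ _ _ mA (fun _ => M @^-1` [set k])) //; last first.
    by rewrite ltNge sqr_ge0.
  rewrite integral_indic // setIC.
  transitivity ((k%:R ^+ 2 : R)%:E * \int[P]_(x in A) (pois_pmf (L x) k)%:E).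
    by congr (_ * _); exact: hP.
  rewrite /pterm; under [RHS]eq_integral do rewrite EFinM.
  rewrite ge0_integralZl_EFin //; first by move=> x _; rewrite lee_fin pois_pmf_ge0.
  by apply/measurable_EFinP; apply: measurable_funTS; exact: measurable_pois_pmf.
under eq_integral => w _ do rewrite M_series.
rewrite integral_nneseries //.
under eq_eseriesr do rewrite term_pois.
rewrite -integral_nneseries //.
apply: ge0_le_integral => //.
- by move=> x _; apply: nneseries_ge0.
- apply: ge0_emeasurable_sum => // k x _ _.
- apply/measurable_EFinP; apply: measurable_funTS; apply: measurable_funD => //.
  exact: measurable_funX.
- move=> x _; apply: lime_le; first exact: is_cvg_nneseries.
  by apply: nearW => n /=; rewrite sumEFin lee_fin big_mkord sum_sqr_pois_pmf_le.
Qed.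

Section intensity_moments.
Context {d : measure_display} {T : measurableType d} {R : realType} (P : probability T R).
Variables (A : set T) (lamn Nn : nat -> T -> R) (a k1 k2 K : R).
Hypotheses (mA : measurable A) (a_ge0 : (0 <= a)%R).
Hypotheses (k1_ge0 : (0 <= k1)%R) (k2_ge0 : (0 <= k2)%R) (k_lt1 : (k1 + k2 < 1)%R).
Hypotheses (mlam : forall s, measurable_fun setT (lamn s))
  (mN : forall s, measurable_fun setT (Nn s)).
Hypothesis lam_ge0 : forall s w, (0 <= lamn s w)%R.
Hypothesis lam_rec : forall s w, (lamn s.+1 w <= a + k1 * lamn s w + k2 * Nn s w)%R.
Hypothesis lam0_le : forall w, A w -> (lamn 0%N w <= K)%R.
Hypothesis N_sqr_le : forall s, \int[P]_(w in A) (Nn s w ^+ 2)%:E <=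
  \int[P]_(w in A) (lamn s w + lamn s w ^+ 2)%:E.

Let msqr {g : T -> R} : measurable_fun setT g -> measurable_fun setT (fun w => g w ^+ 2)%R.
Proof. exact: measurable_funX. Qed.

Lemma integral_N_sqr_le s (eta B : R) : (0 < eta)%R ->
  \int[P]_(w in A) (lamn s w ^+ 2)%:E <= B%:E ->
  \int[P]_(w in A) (Nn s w ^+ 2)%:E <= ((4 * eta)^-1 + (1 + eta) * B)%:E.
Proof.
move=> eta_gt0 lamB; apply: (le_trans (N_sqr_le s)).
pose l2 w := (lamn s w ^+ 2)%R.
apply: (@integral_le_affine _ _ _ P A _ l2 l2 (4 * eta)^-1 (1 + eta) 0 B B) => //.
- exact: measurable_funD (mlam s) (msqr (mlam s)).
- exact: msqr.
- exact: msqr.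
- by move=> w; rewrite addr_ge0 ?sqr_ge0.
- by move=> w; rewrite sqr_ge0.
- by move=> w; rewrite sqr_ge0.
- by rewrite invr_ge0 mulr_ge0 // ltW.
- by rewrite addr_ge0 // ltW.
- move=> w _; rewrite /l2 mul0r addr0.
  set l := lamn s w; set b := ((4 * eta)^-1)%R.
  (* AM-GM: l <= 1 / (4 eta) + eta l^2 *)
  have b_id : (4 * eta * b = 1)%R by rewrite mulfV // gt_eqF // mulr_gt0.
  have := mulr_ge0 (ltW eta_gt0) (sqr_ge0 (l - 2 * b)).
  have : (4 * eta * b * l = l)%R by rewrite b_id mul1r.
  have : (4 * eta * b * b = b)%R by rewrite b_id mul1r.
  nra.
- by rewrite mul0r addr0.
Qed.

Lemma integral_lam_sqr_bounded : exists B : R, forall s,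
  \int[P]_(w in A) (lamn s w ^+ 2)%:E <= B%:E.
Proof.
set k := (k1 + k2)%R.
have k_lt : (0 < 1 - k)%R by rewrite subr_gt0.
set eta := ((1 - k) / (2 * (k2 + 1)))%R.
have eta_gt0 : (0 < eta)%R by rewrite divr_gt0 // mulr_gt0 // ltr_pwDr.
(* contraction factor of the recursion satisfied by the second moments *)
set rho := (k1 + k2 * (1 + eta))%R.
have rho_lt1 : (rho < 1)%R.
  have : (eta * (k2 + 1) = (1 - k) / 2)%R by rewrite /eta; field; rewrite gt_eqF // ltr_pwDr.
  rewrite /rho /k in k_lt *; lra.
set C0 := (a ^+ 2 / (1 - k) + k2 * (4 * eta)^-1)%R.
set B0 := (Num.max (K ^+ 2) (C0 / (1 - rho)))%R.
have B0_ge : (C0 + rho * B0 <= B0)%R.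
  have : (C0 / (1 - rho) <= B0)%R by rewrite le_max lexx orbT.
  by rewrite ler_pdivrMr ?subr_gt0 //; lra.
exists B0; elim => [|s IH].
  apply: (@integral_le_affine _ _ _ P A _ (cst 0%R) (cst 0%R) (K ^+ 2) 0 0 0 0) => //.
  - exact: msqr.
  - by move=> w; rewrite sqr_ge0.
  - exact: sqr_ge0.
  - move=> w Aw; rewrite !mul0r !addr0 lerXn2r ?nnegrE ?lam0_le //.
    by rewrite (le_trans (lam_ge0 0%N w)) ?lam0_le.
  - by rewrite integral0.
  - by rewrite integral0.
  - by rewrite !mul0r !addr0 le_max lexx.
apply: (@integral_le_affine _ _ _ P A _ (fun w => lamn s w ^+ 2)%R (fun w => Nn s w ^+ 2)%R
  (a ^+ 2 / (1 - k)) k1 k2 B0 ((4 * eta)^-1 + (1 + eta) * B0) B0) => //;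
  try by [exact: msqr|move=> w; exact: sqr_ge0].
- by rewrite divr_ge0 ?sqr_ge0 // ltW.
- by move=> w _; apply: sqr_le_affine.
- exact: integral_N_sqr_le.
- by apply: le_trans B0_ge; rewrite /C0 /rho; lra.
Qed.

Lemma integral_intensity_sqr_bounded : exists B : R, forall s,
  \int[P]_(w in A) ((lamn s w + Nn s w + 1) ^+ 2)%:E <= B%:E.
Proof.
have [B lamB] := integral_lam_sqr_bounded.
pose H := ((4 * 1)^-1 + (1 + 1) * B)%R.
exists (3 + 3 * B + 3 * H)%R => s.
apply: (@integral_le_affine _ _ _ P A _ (fun w => lamn s w ^+ 2)%R (fun w => Nn s w ^+ 2)%R
  3 3 3 B H) => //; try by [exact: msqr|move=> w; exact: sqr_ge0].
- by apply: msqr; apply: measurable_funD => //; exact: measurable_funD.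
- move=> w _; set l := lamn s w; set m := Nn s w.
  have := sqr_ge0 (l - m); have := sqr_ge0 (l - 1); have := sqr_ge0 (m - 1); nra.
- exact: integral_N_sqr_le.
Qed.

End intensity_moments.

Local Close Scope ereal_scope.

Section bounded_in_probability.
Context {d : measure_display} {T : measurableType d} {R : realType} (P : probability T R).
Implicit Types X Y : nat -> T -> R.

Lemma bounded_in_prob_cst (g : T -> R) : measurable_fun setT g ->
  bounded_in_prob P (fun _ => g).
Proof.
move=> mg eps e0.
have mng : measurable_fun setT (fun w => `|g w|) by exact: measurableT_comp.
have [K tailK] := prob_tail_small P _ mng _ e0.
exists K, 0%N => n _; exists [set w | K < `|g w|].
by split; [exact: measurable_cst_ltr|split].
Qed.

Lemma bounded_in_prob_max {X Y} : bounded_in_prob P X -> bounded_in_prob P Y ->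
  bounded_in_prob P (fun n w => Num.max `|X n w| `|Y n w|).
Proof.
move=> hX hY eps e0; have e2 : 0 < eps / 2 by rewrite divr_gt0.
have [MX [nX hnX]] := hX _ e2; have [MY [nY hnY]] := hY _ e2.
exists (Num.max MX MY), (maxn nX nY) => n; rewrite geq_max.
move=> /andP[/hnX[AX [mAX [sAX pAX]]] /hnY[AY [mAY [sAY pAY]]]].
exists (AX `|` AY); split; first exact: measurableU.
split.
  move=> w /= Mlt; apply: contrapT => /not_orP[nAX nAY]; move: Mlt; apply/negP.
  have XM : `|X n w| <= MX by rewrite leNgt; apply/negP => /sAX.
  have YM : `|Y n w| <= MY by rewrite leNgt; apply/negP => /sAY.
  rewrite -leNgt ger0_norm; last by rewrite le_max normr_ge0.
  by rewrite ge_max !le_max XM YM orbT.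
apply: (le_trans (measureU2 _ mAX mAY)).
by rewrite [eps](splitr eps) EFinD leeD.
Qed.

Lemma bounded_in_prob_dominated {X Y} (G : R -> R) : bounded_in_prob P X ->
  (forall M, exists n0, forall n w, (n0 <= n)%N -> `|X n w| <= M -> `|Y n w| <= G M) ->
  bounded_in_prob P Y.
Proof.
move=> hX hY eps e0; have [M [n0 hn0]] := hX _ e0; have [n1 hn1] := hY M.
exists (G M), (maxn n0 n1) => n; rewrite geq_max => /andP[/hn0[A [mA [sA pA]]] n1n].
exists A; split=> //; split=> // w /= YG; apply: sA; rewrite /= ltNge; apply/negP => XM.
by move: YG; rewrite ltNge hn1.
Qed.

Lemma integral_mean_le {A} {Z : nat -> T -> R} {B : R} {n} : measurable A ->
  (forall s, measurable_fun setT (Z s)) -> (forall s w, 0 <= Z s w) -> (0 < n)%N ->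
  (forall s, (\int[P]_(w in A) (Z s w)%:E <= B%:E)%E) ->
  (\int[P]_(w in A) ((\sum_(i < n) Z i w) / n%:R)%:E <= B%:E)%E.
Proof.
move=> mA mZ Z0 n_gt0 ZB.
have n_neq0 : n%:R != 0 :> R by rewrite pnatr_eq0 -lt0n.
have mZE i : measurable_fun A (fun w => (Z i w)%:E).
  by apply/measurable_EFinP; exact: measurable_funTS.
rewrite (_ : B = n%:R^-1 * \sum_(i < n) B); last first.
  by rewrite sumr_const card_ord -[B *+ n]mulr_natl mulKf.
under eq_integral do rewrite mulrC EFinM -sumEFin.
rewrite ge0_integralZl_EFin ?invr_ge0 //; first last.
- exact: emeasurable_sum.
- by move=> w _; rewrite sume_ge0 // => i _; rewrite lee_fin.
rewrite EFinM lee_wpmul2l ?lee_fin ?invr_ge0 // ge0_integral_sum //; last first.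
  by move=> i w _; rewrite lee_fin.
by rewrite -sumEFin; apply: lee_sum => i _; exact: ZB.
Qed.

Lemma bounded_in_prob_mean (Z : nat -> T -> R) :
  (forall s, measurable_fun setT (Z s)) -> (forall s w, 0 <= Z s w) ->
  (forall eps, 0 < eps -> exists A, exists B : R, measurable A /\
     (P (~` A) <= eps%:E)%E /\ forall s, (\int[P]_(w in A) (Z s w)%:E <= B%:E)%E) ->
  bounded_in_prob P (fun n w => (\sum_(i < n) Z i w) / n%:R).
Proof.
move=> mZ Z0 hZ eps e0; have e2 : 0 < eps / 2 by rewrite divr_gt0.
have [A [B [mA [PA ZB]]]] := hZ _ e2.
set B1 := Num.max B 1; have B1_gt0 : 0 < B1 by rewrite lt_max ltr01 orbT.
set L := B1 / (eps / 2); have L_gt0 : 0 < L by rewrite divr_gt0.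
exists L, 1%N => n n_gt0.
pose mean w := (\sum_(i < n) Z i w) / n%:R.
have mean_ge0 w : 0 <= mean w by apply: divr_ge0 => //; exact: sumr_ge0.
have mmean : measurable_fun setT mean.
  by apply: measurable_funM => //; exact: measurable_sum.
exists (~` A `|` (A `&` [set w | L < mean w])); split.
  by apply: measurableU; [exact: measurableC|apply: measurableI => //; exact: measurable_cst_ltr].
split.
  move=> w /=; rewrite (ger0_norm (mean_ge0 w)) => Lm.
  by have [Aw|nAw] := pselect (A w); [right|left].
have int_mean : (\int[P]_(w in A) (mean w)%:E <= B1%:E)%E.
  apply: (le_trans (integral_mean_le mA mZ Z0 n_gt0 ZB)).
  by rewrite lee_fin le_max lexx.
have mAL : measurable (A `&` [set w | L < mean w]).
  by apply: measurableI => //; exact: measurable_cst_ltr.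
apply: (le_trans (measureU2 _ (measurableC mA) mAL)).
rewrite [eps](splitr eps) EFinD leeD // (_ : eps / 2 = L^-1 * B1).
  by rewrite EFinM lee_pdivlMl // (le_trans (markov_setI P _ _ _ mA mmean mean_ge0 L_gt0)).
by rewrite /L invf_div divfK // gt_eqF.
Qed.

End bounded_in_probability.

Lemma PoszS_sub1 (s : nat) : Posz s.+1 - 1 = Posz s.
Proof. by rewrite -addn1 PoszD addrK. Qed.

Section poisson_autoregression.
Context {dT : measure_display} {T : measurableType dT} {R : realType}.
Context {P : probability T R} {N : int -> T -> nat} {lam : int -> T -> R}.
Context {g : R -> nat -> R} {kappa1 kappa2 : R}.
Hypothesis g_ge0 : forall (l : R) y, 0 <= l -> 0 <= g l y.
Hypothesis g_lip : forall (l l' : R) y y', 0 <= l -> 0 <= l' ->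
  `|g l y - g l' y'| <= kappa1 * `|l - l'| + kappa2 * `|y%:R - y'%:R|.
Hypotheses (k1_ge0 : 0 <= kappa1) (k2_ge0 : 0 <= kappa2) (k_lt1 : kappa1 + kappa2 < 1).
Hypotheses (mlam : forall t, measurable_fun setT (lam t))
  (mN : forall t (k : nat), measurable (N t @^-1` [set k]))
  (lam_ge0 : forall t w, 0 <= lam t w).
Hypothesis lam_pois : forall t A, past_sigma N lam t A -> forall k : nat,
  P (A `&` [set w | N t w = k]) = (\int[P]_(w in A) (pois_pmf (lam t w) k)%:E)%E.
Hypothesis lamE : forall t w, lam t w = g (lam (t - 1) w) (N (t - 1) w).

Lemma g_le_affine (l : R) y : 0 <= l -> g l y <= g 0 0%N + kappa1 * l + kappa2 * y%:R.
Proof.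
move=> l0; have := g_lip l 0 y 0%N l0 (lexx 0).
rewrite !subr0 (ger0_norm l0) (ger0_norm (ler0n _ y)) => lip.
by rewrite -addrA -lerBlDl; exact: le_trans (ler_norm _) lip.
Qed.

Lemma past_sigma_init (s : nat) (B : set R) (C : set nat) : measurable B ->
  past_sigma N lam (Posz s.+1) (lam 0 @^-1` B `&` N 0 @^-1` C).
Proof.
move=> mB; apply: (@measurableI _ (g_sigma_algebraType _)); apply: sub_sigma_algebra;
  exists 0; rewrite PoszS_sub1; split => //; [left; exists B|right; exists C] => //.
Qed.

Lemma intensity_sqr_bounded_whp (eps : R) : 0 < eps -> exists A, exists B : R,
  measurable A /\ (P (~` A) <= eps%:E)%E /\ forall s : nat,
  (\int[P]_(w in A) ((lam (Posz s.+1) w + (N (Posz s.+1) w)%:R + 1) ^+ 2)%:E <= B%:E)%E.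
Proof.
move=> e0.
have mNr t : measurable_fun setT (fun w => (N t w)%:R : R) by exact: measurable_natr.
have [K tailK] := prob_tail_small P _ (measurable_funD (mlam 0) (mNr 0)) _ e0.
pose A := lam 0 @^-1` `]-oo, K] `&` [set w | (N 0 w)%:R <= K].
have mA : measurable A.
  apply: measurableI; last exact: measurable_ler_cst.
  by rewrite -[X in measurable X]setTI; exact: mlam.
have PA : (P (~` A) <= eps%:E)%E.
  apply: le_trans tailK; apply: le_measure; rewrite ?inE //.
  - exact: measurableC.
  - exact: measurable_cst_ltr (measurable_funD (mlam 0) (mNr 0)).
  move=> w; rewrite /A /preimage /= in_itv /= => /not_andP[] /negP; rewrite -ltNge => Klt.
  - by rewrite (lt_le_trans Klt) // lerDl.
  - by rewrite (lt_le_trans Klt) // lerDr.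
pose a := g 0 0%N.
have lam_rec s w : lam (Posz s.+2) w <=
    a + kappa1 * lam (Posz s.+1) w + kappa2 * (N (Posz s.+1) w)%:R.
  by rewrite lamE PoszS_sub1 g_le_affine.
have lam1_le w : A w -> lam 1 w <= a + kappa1 * K + kappa2 * K.
  move=> [/=]; rewrite in_itv /= => lamK NK.
  rewrite lamE (PoszS_sub1 0) (le_trans (g_le_affine _ _ (lam_ge0 _ _))) // -!addrA lerD2l.
  by rewrite lerD // ler_wpM2l.
have N_sqr_le s : (\int[P]_(w in A) (((N (Posz s.+1) w)%:R : R) ^+ 2)%:E <=
    \int[P]_(w in A) (lam (Posz s.+1) w + lam (Posz s.+1) w ^+ 2)%:E)%E.
  apply: (@integral_sqr_le_pois _ _ _ P (N (Posz s.+1)) (lam (Posz s.+1)) A) => //.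
  exact: lam_pois (past_sigma_init s `]-oo, K] [set k | k%:R <= K] (measurable_itv _)).
have [B intB] := @integral_intensity_sqr_bounded _ _ _ P A (fun s => lam (Posz s.+1))
  (fun s w => (N (Posz s.+1) w)%:R) a kappa1 kappa2 (a + kappa1 * K + kappa2 * K)
  mA (g_ge0 0 0%N (lexx 0)) k1_ge0 k2_ge0 k_lt1 (fun s => mlam _) (fun s => mNr _)
  (fun s w => lam_ge0 _ w) lam_rec lam1_le N_sqr_le.
by exists A, B.
Qed.

Lemma bounded_in_prob_mean_intensity_sqr : bounded_in_prob P (fun n w =>
  (\sum_(i < n) (lam (Posz i.+1) w + (N (Posz i.+1) w)%:R + 1) ^+ 2) / n%:R).
Proof.
apply: (bounded_in_prob_mean P (fun s w => (lam (Posz s.+1) w + (N (Posz s.+1) w)%:R + 1) ^+ 2)).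
- move=> s; apply: measurable_funX; apply: measurable_funD => //.
  by apply: measurable_funD => //; exact: measurable_natr.
- by move=> s w; exact: sqr_ge0.
- exact: intensity_sqr_bounded_whp.
Qed.

End poisson_autoregression.

Lemma le_normr_max (R : realType) (x y M : R) :
  (`|Num.max `|x| `|y| | <= M) = (`|x| <= M) && (`|y| <= M).
Proof. by rewrite ger0_norm ?ge_max // le_max normr_ge0. Qed.

Lemma root_n_rate_le {R : realType} {e delta M : R} {n : nat} : 0 <= e -> 0 < delta ->
  (Num.truncn (M ^+ 2 / delta ^+ 2) < n)%N -> `|e / (Num.sqrt n%:R)^-1| <= M ->
  e ^+ 2 * n%:R <= M ^+ 2 /\ e <= delta.
Proof.
move=> e_ge0 delta_gt0 n_gt eM.
have n_gt0 : (0 < n)%N by apply: leq_trans n_gt.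
have sqrtn_gt0 : 0 < Num.sqrt n%:R :> R by rewrite sqrtr_gt0 ltr0n.
have e2n : e ^+ 2 * n%:R <= M ^+ 2.
  rewrite invrK ger0_norm in eM; last by rewrite mulr_ge0 // ltW.
  rewrite -[n%:R]sqr_sqrtr ?ler0n // -exprMn !expr2.
  by apply: ler_pM => //; rewrite mulr_ge0 // ltW.
split=> //.
have : M ^+ 2 / delta ^+ 2 < n%:R by rewrite (lt_le_trans (truncnS_gt _)) // ler_nat.
rewrite ltr_pdivrMr ?exprn_gt0 // => Mn.
have : e ^+ 2 < delta ^+ 2.
  by rewrite -(@ltr_pM2r _ n%:R) ?ltr0n // (le_lt_trans e2n) // mulrC.
by have := ltW delta_gt0; nra.
Qed.

Lemma sqr_err_bound_le {R : realType} {k C e D S M : R} {n : nat} :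
  0 <= k -> k < 1 -> (0 < n)%N -> e ^+ 2 * n%:R <= M ^+ 2 -> `|D| <= M ->
  0 <= S -> S / n%:R <= M ->
  (D ^+ 2 + (1 - k)^-1 * (C * e) ^+ 2 * S) / (1 - k) <=
    (1 - k)^-1 * (M ^+ 2 + (1 - k)^-1 * C ^+ 2 * M ^+ 3).
Proof.
move=> k_ge0 k_lt1 n_gt0 e2n DM S_ge0 SM.
have c_ge0 : 0 <= (1 - k)^-1 by rewrite invr_ge0 subr_ge0 ltW.
have Sn_ge0 : 0 <= S / n%:R by rewrite divr_ge0.
rewrite mulrC; apply: ler_wpM2l => //; apply: lerD.
  by rewrite -real_normK ?num_real // !expr2; apply: ler_pM.
rewrite -[X in X <= _]mulrA -[X in _ <= X]mulrA; apply: ler_wpM2l => //; rewrite exprMn -mulrA.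
apply: ler_wpM2l; first exact: sqr_ge0.
rewrite (_ : e ^+ 2 * S = (e ^+ 2 * n%:R) * (S / n%:R)).
  by rewrite [M ^+ 3]exprSr; apply: ler_pM => //; exact: mulr_ge0 (sqr_ge0 _) (ler0n _ _).
by rewrite mulrA -[_ * n%:R * S]mulrA [n%:R * _]mulrC mulrA mulfK // pnatr_eq0 -lt0n.
Qed.

Lemma enorm_ge0 {R : realType} {d : nat} (v : 'rV[R]_d) : 0 <= enorm v.
Proof. exact: sqrtr_ge0. Qed.

Lemma enorm0 (R : realType) (d : nat) : enorm (0 : 'rV[R]_d) = 0.
Proof. by rewrite /enorm big1 ?sqrtr0 // => i _; rewrite mxE expr0n. Qed.

Theorem lemma4p3 (R : realType) (d : nat) (Theta : set 'rV[R]_d)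
  (f : 'rV[R]_d -> R -> nat -> R) (theta0 : 'rV[R]_d)
  (delta C kappa1 kappa2 : R)
  (dT : measure_display) (T : measurableType dT) (P : probability T R)
  (N : int -> T -> nat) (lam : int -> T -> R)
  (thetahat : nat -> T -> 'rV[R]_d) (lamhat1 : T -> R) :
  (* f_theta : [0,oo) x N_0 -> [0,oo) for theta in Theta *)
  (forall th l y, Theta th -> 0 <= l -> 0 <= f th l y) ->
  Theta theta0 ->
  0 < delta -> 0 <= kappa1 -> 0 <= kappa2 -> kappa1 + kappa2 < 1 ->
  (* (i) *)
  (forall th, Theta th -> enorm (th - theta0) <= delta ->
     forall l y, 0 <= l ->
       `|f th l y - f theta0 l y| <= C * enorm (th - theta0) * (l + y%:R + 1)) ->
  (* (ii) *)
  (forall th, Theta th -> enorm (th - theta0) <= delta ->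
     forall l l' y y', 0 <= l -> 0 <= l' ->
       `|f th l y - f th l' y'| <= kappa1 * `|l - l'| + kappa2 * `|y%:R - y'%:R|) ->
  (forall t, measurable_fun setT (lam t)) ->
  (forall t (k : nat), measurable (N t @^-1` [set k])) ->
  (forall t w, 0 <= lam t w) ->
  strictly_stationary P N lam ->
  (forall t A, past_sigma N lam t A -> forall k : nat,
     P (A `&` [set w | N t w = k]) =
     (\int[P]_(w in A) (pois_pmf (lam t w) k)%:E)%E) ->
  (forall t w, lam t w = f theta0 (lam (t - 1) w) (N (t - 1) w)) ->
  (* estimators based on N_1, ..., N_n, with values in Theta *)
  (forall n (i : 'I_d), measurable_fun setT (fun w => thetahat n w ord0 i)) ->
  (forall n w, Theta (thetahat n w)) ->
  (forall n w w', (forall t : nat, (1 <= t <= n)%N -> N (Posz t) w = N (Posz t) w') ->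
     thetahat n w = thetahat n w') ->
  OP P (fun n w => enorm (thetahat n w - theta0)) (fun n => (Num.sqrt n%:R)^-1) ->
  measurable_fun setT lamhat1 ->
  (forall w, 0 <= lamhat1 w) ->
  OP P (fun n w => \sum_(i < n)
          (lam (Posz i.+1) w -
           lamhat f (thetahat n w) (lamhat1 w) (fun s => N (Posz s) w) i) ^+ 2)
     (fun _ => 1).
Proof.
move=> f_ge0 Theta0 delta_gt0 k1_ge0 k2_ge0 k_lt1 f_near f_lip mlam mN lam_ge0 _ lam_pois
  lamE _ Theta_hat _ hOP mlh1 lh1_ge0.
have k1_lt1 : kappa1 < 1 by rewrite (le_lt_trans _ k_lt1) // lerDl.
have theta0_near : enorm (theta0 - theta0) <= delta by rewrite subrr enorm0 ltW.
have hD := bounded_in_prob_cst P _ (measurable_funB (mlam 1) mlh1).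
have hS := bounded_in_prob_mean_intensity_sqr (fun l y => f_ge0 _ l y Theta0)
  (f_lip _ Theta0 theta0_near) k1_ge0 k2_ge0 k_lt1 mlam mN lam_ge0 lam_pois lamE.
pose c := (1 - kappa1)^-1.
apply: (bounded_in_prob_dominated P (fun M => c * (M ^+ 2 + c * C ^+ 2 * M ^+ 3))
  (bounded_in_prob_max P (bounded_in_prob_max P hD hOP) hS)) => M.
exists (Num.truncn (M ^+ 2 / delta ^+ 2)).+1 => n w n_gt.
rewrite !le_normr_max => /andP[/andP[DM eM] SM].
have [e2n e_le] := root_n_rate_le (enorm_ge0 _) delta_gt0 n_gt eM.
have lamS i : lam (Posz i.+2) w = f theta0 (lam (Posz i.+1) w) (N (Posz i.+1) w).
  by rewrite lamE PoszS_sub1.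
rewrite divr1 ger0_norm; last by apply: sumr_ge0 => i _; exact: sqr_ge0.
apply: (le_trans (sum_sqr_lamhat_err_le (fun l y => f_ge0 _ l y (Theta_hat n w))
  (f_lip _ (Theta_hat n w) e_le) (f_near _ (Theta_hat n w) e_le) _ _ _ _ k1_ge0 k1_lt1
  (lh1_ge0 w) (fun i => lam_ge0 _ w) lamS)).
have n_gt0 : (0 < n)%N by exact: leq_trans (ltn0Sn _) n_gt.
have S_ge0 : 0 <= \sum_(i < n) (lam (Posz i.+1) w + (N (Posz i.+1) w)%:R + 1) ^+ 2.
  by apply: sumr_ge0 => i _; exact: sqr_ge0.
apply: (sqr_err_bound_le k1_ge0 k1_lt1 n_gt0 e2n DM S_ge0).
by rewrite -[_ / n%:R]ger0_norm // divr_ge0.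
Qed.
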